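(* Let $p,q$ be positive integers and $k,\ell$ positive integers with $k\le \ell$, and let $A=\{a_1<\cdots<a_p\}$, $B=\{b_1<\cdots<b_q\}$ be linearly ordered sets. Fix indices $i_1,\dots,i_{k-1}\in\{1,\dots,p\}$, and let $(G;A,B)$ be the ordered bipartite graph with edge set $$\{a_ib_j: 1\le i\le p,\ 1\le j\le \ell-1\}\cup\{a_{i_h}b_j: \ell\le j\le q,\ 1\le h\le k-1\}.$$ Suppose $k\le p$, $\ell\le q$ and $k\le p\le \ell-1$. Then (i) $(G;A,B)$ is $K_{k,\ell}$-interval minor free; (ii) $m(p,q,k,\ell)\geq (\ell-1)(p-k+1)+q(k-1)$.
   Context: An ordered bipartite graph $(G;A,B)$ is a simple bipartite graph $G$ with parts $A,B$, each equipped with a linear order. Two vertices $u<v$ of the same part are consecutive if no vertex $w$ of that part satisfies $u<w<v$. Identifying two consecutive vertices $u,v$ of a part replaces them by a single vertex $w$ (in their position in the order) with $N(w)=N(u)\cup N(v)$; the result is again a simple ordered bipartite graph. Two ordered bipartite graphs are isomorphic if there is a graph isomorphism between them mapping parts to parts (possibly exchanging the two parts) and preserving the linear orders of the parts. An ordered bipartite graph $H$ is an interval minor of $G$ if a graph isomorphic to $H$ can be obtained from $G$ by repeatedly deleting edges and identifying two consecutive vertices; $G$ is $H$-interval minor free otherwise. $m(p,q,k,\ell)$ denotes the maximum number of edges of an ordered bipartite graph with parts of sizes $p$ and $q$ that is $K_{k,\ell}$-interval minor free. *)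

From Stdlib Require Import Relations.
From mathcomp Require Import all_boot all_order.
From mathcomp Require Import boolp.
Set Implicit Arguments. Unset Strict Implicit. Unset Printing Implicit Defensive.

(* An ordered bipartite graph: part A = {0,..,np-1}, part B = {0,..,nq-1},
   both with the natural order of nat; adjacency is [adj x y] for x < np, y < nq
   (values of adj outside this range are irrelevant). *)
Record obg := OBG { np : nat; nq : nat; adj : nat -> nat -> bool }.

Definition nedges (G : obg) : nat :=
  #|[set xy : 'I_(np G) * 'I_(nq G) | adj G xy.1 xy.2]|.

Definition identA (G : obg) (i : nat) : obg :=
  OBG (np G).-1 (nq G)
    (fun x y => if x < i then adj G x y
                else if x == i then adj G i y || adj G i.+1 y
                else adj G x.+1 y).

Definition identB (G : obg) (j : nat) : obg :=
  OBG (np G) (nq G).-1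
    (fun x y => if y < j then adj G x y
                else if y == j then adj G x j || adj G x j.+1
                else adj G x y.+1).

Definition delE (G : obg) (a b : nat) : obg :=
  OBG (np G) (nq G) (fun x y => adj G x y && ~~ ((x == a) && (y == b))).

Inductive step : obg -> obg -> Prop :=
| step_del : forall G a b, a < np G -> b < nq G -> adj G a b -> step G (delE G a b)
| step_idA : forall G i, i.+1 < np G -> step G (identA G i)
| step_idB : forall G j, j.+1 < nq G -> step G (identB G j).

(* Isomorphism of ordered bipartite graphs: bijections between parts preserving
   the linear orders and adjacency, possibly exchanging the two parts. *)
Definition obg_iso (G H : obg) : Prop :=
  (exists (f : 'I_(np G) -> 'I_(np H)) (g : 'I_(nq G) -> 'I_(nq H)),
      [/\ bijective f, bijective g,
          (forall x y : 'I_(np G), x < y -> f x < f y),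
          (forall x y : 'I_(nq G), x < y -> g x < g y) &
          (forall (x : 'I_(np G)) (y : 'I_(nq G)), adj G x y = adj H (f x) (g y))])
  \/
  (exists (f : 'I_(np G) -> 'I_(nq H)) (g : 'I_(nq G) -> 'I_(np H)),
      [/\ bijective f, bijective g,
          (forall x y : 'I_(np G), x < y -> f x < f y),
          (forall x y : 'I_(nq G), x < y -> g x < g y) &
          (forall (x : 'I_(np G)) (y : 'I_(nq G)), adj G x y = adj H (g y) (f x))]).

Definition interval_minor (H G : obg) : Prop :=
  exists G', clos_refl_trans obg step G G' /\ obg_iso G' H.

Definition Kbip (k l : nat) : obg := OBG k l (fun _ _ => true).

Definition of_ffun (p q : nat) (E : {ffun 'I_p * 'I_q -> bool}) : obg :=
  OBG p q (fun x y => match insub x, insub y with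
                      | Some x', Some y' => E (x', y')
                      | _, _ => false end).

Definition m_ex (p q k l : nat) : nat :=
  \max_(E : {ffun 'I_p * 'I_q -> bool} |
          `[< ~ interval_minor (Kbip k l) (of_ffun E) >])
     nedges (of_ffun E).

(* The graph of Lemma 2.3 (0-based indices; ih h = i_{h+1} - 1). *)
Definition G23 (p q l : nat) (k : nat) (ih : 'I_k.-1 -> 'I_p) : obg :=
  OBG p q (fun x y => [&& x < p, y < q &
                         (y < l.-1) || [exists h, (ih h : nat) == x]]).
Arguments G23 p q l {k} ih.

(* Call the vertices of A rows and those of B columns.  Along any sequence of
   edge deletions and identifications, there stay at most l-1 rows, and for
   some column threshold c <= l-1 all edges into the columns from c on meet
   one of at most k-1 fixed rows (identifying two columns only moves the
   threshold left).  A copy of K_{k,l} with k rows would put all k rows on an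
   edge into its last column, and a copy with l rows has too many rows.  For
   the lower bound, the graph with k-1 full rows and all other rows joined to
   the first l-1 columns has the same property. *)
From mathcomp Require Import all_boot all_order.
From mathcomp Require Import boolp zify.
From Stdlib Require Import Relations.

Set Implicit Arguments.
Unset Strict Implicit.
Unset Printing Implicit Defensive.

Definition tail_cover (r c0 : nat) (G : obg) : Prop :=
  exists c (s : seq nat), [/\ c <= c0, size s <= r &
    forall x y, x < np G -> y < nq G -> c <= y -> adj G x y -> x \in s].

Section TailCover.

Variables r c0 : nat.

Lemma tail_cover_delE G a b : tail_cover r c0 G -> tail_cover r c0 (delE G a b).
Proof.
move=> [c [s [Hc Hs Hcov]]]; exists c, s; split=> // x y Hx Hy Hcy /andP[Exy _].
exact: (Hcov x y).
Qed.

Lemma tail_cover_identA G i : tail_cover r c0 G -> tail_cover r c0 (identA G i).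
Proof.
move=> [c [s [Hc Hs Hcov]]].
exists c, [seq if x <= i then x else x.-1 | x <- s].
split=> //; first by rewrite size_map.
move=> x y /= Hx Hy Hcy; case: ltnP => [Hxi | Hix] Exy.
  by apply/mapP; exists x; [apply: Hcov; lia | rewrite ltnW].
case: eqP Exy => [-> | Hxi].
  case/orP=> Exy; apply/mapP; [exists i | exists i.+1];
    by [apply: Hcov; lia | rewrite ?leqnn ?ltnn].
move=> Exy; apply/mapP; exists x.+1; first by apply: Hcov; lia.
by rewrite ifF //; lia.
Qed.

Lemma tail_cover_identB G j : tail_cover r c0 G -> tail_cover r c0 (identB G j).
Proof.
move=> [c [s [Hc Hs Hcov]]].
exists (if j.+1 < c then c.-1 else c), s; split=> //; first by case: ifP; lia.
move=> x y /= Hx Hy Hcy Exy.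
suff [y' [Hy' Hcy' Exy']] : exists y', [/\ y' < nq G, c <= y' & adj G x y'].
  exact: (Hcov x y').
move: Exy; case: ltnP => Hyj; last case: eqP => [Eyj | Hyj'].
- by exists y; split=> //; move: Hcy; case: ifP; lia.
- by case/orP; [exists j | exists j.+1]; split=> //; move: Hcy; case: ifP; lia.
- by exists y.+1; split=> //; move: Hcy; case: ifP; lia.
Qed.

Lemma tail_cover_step G G' : step G G' -> tail_cover r c0 G -> tail_cover r c0 G'.
Proof.
by case=> *; [apply: tail_cover_delE | apply: tail_cover_identA | apply: tail_cover_identB].
Qed.

End TailCover.

Lemma step_np_le G G' : step G G' -> np G' <= np G.
Proof. by case=> * /=; lia. Qed.

Lemma clos_rt_step_invariant (P : obg -> Prop) G G' :
  (forall H H', step H H' -> P H -> P H') ->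
  clos_refl_trans obg step G G' -> P G -> P G'.
Proof.
move=> HP; elim=> {G G'} [G G' /HP | // | G1 G2 G3 _ IH12 _ IH23 /IH12 /IH23] //.
Qed.

Lemma Kbip_not_iso k l G : 0 < k -> 0 < l -> np G <= l.-1 ->
  tail_cover k.-1 l.-1 G -> ~ obg_iso G (Kbip k l).
Proof.
move=> k0 l0 Hnp [c [s [Hc Hs Hcov]]].
case=> [[f [g [bf bg _ _ Hadj]]] | [f [g [bf _ _ _ _]]]]; last first.
  by move: (bij_eq_card bf); rewrite !card_ord /=; lia.
have ek : np G = k by move: (bij_eq_card bf); rewrite !card_ord.
have el : nq G = l by move: (bij_eq_card bg); rewrite !card_ord.
have rows_in_s : {subset iota 0 k <= s}.
  move=> x; rewrite mem_iota add0n => /andP[_ xk].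
  have xn : x < np G by rewrite ek.
  have yn : l.-1 < nq G by rewrite el; lia.
  by apply: (Hcov x l.-1) => //; have := Hadj (Ordinal xn) (Ordinal yn).
have := leq_trans (uniq_leq_size (iota_uniq 0 k) rows_in_s) Hs.
by rewrite size_iota; lia.
Qed.

Lemma tail_cover_Kbip_free k l G : 0 < k -> 0 < l -> np G <= l.-1 ->
  tail_cover k.-1 l.-1 G -> ~ interval_minor (Kbip k l) G.
Proof.
move=> k0 l0 Hnp Hcov [G' [HGG' Hiso]].
pose P H := np H <= l.-1 /\ tail_cover k.-1 l.-1 H.
have [Hnp' Hcov'] : P G'.
  apply: (clos_rt_step_invariant _ HGG') => // H H' st [HnpH HcovH].
  by split; [exact: leq_trans (step_np_le st) HnpH | exact: tail_cover_step st HcovH].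
exact: Kbip_not_iso Hnp' Hcov' Hiso.
Qed.

Lemma nedges_of_ffun p q (E : {ffun 'I_p * 'I_q -> bool}) :
  nedges (of_ffun E) = \sum_(x < p) \sum_(y < q) E (x, y).
Proof.
rewrite /nedges pair_bigA /= -sum1_card big_mkcond /=.
by apply: eq_bigr => xy _; rewrite inE /= !valK; case: (E _).
Qed.

Lemma sum_ord_ltn n m : m <= n -> \sum_(i < n) (i < m : nat) = m.
Proof.
move=> mn; rewrite -(subnKC mn) big_split_ord /=.
rewrite (eq_bigr (fun _ => 1)) => [|i _]; last by rewrite ltn_ord.
rewrite [X in _ + X]big1 => [|i _]; last by rewrite ltnNge leq_addr.
by rewrite sum1_card card_ord addn0.
Qed.

Definition rows_cols (p q r c : nat) : {ffun 'I_p * 'I_q -> bool} :=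
  [ffun xy : 'I_p * 'I_q => (xy.2 < c) || (xy.1 < r)].

Lemma nedges_rows_cols p q r c : r <= p -> c <= q ->
  nedges (of_ffun (rows_cols p q r c)) = r * q + (p - r) * c.
Proof.
move=> rp cq; rewrite nedges_of_ffun -[in LHS](subnKC rp) big_split_ord /=.
congr (_ + _).
- rewrite (eq_bigr (fun _ => q)) ?sum_nat_const ?card_ord // => x _.
  rewrite -[RHS]card_ord -sum1_card; apply: eq_bigr => y _.
  by rewrite ffunE /= ltn_ord orbT.
- rewrite (eq_bigr (fun _ => c)) ?sum_nat_const ?card_ord // => x _.
  rewrite -[RHS](@sum_ord_ltn q c) //; apply: eq_bigr => y _.
  by rewrite ffunE /= [_ + _ < _]ltnNge leq_addr orbF.
Qed.

Lemma tail_cover_rows_cols p q r c : tail_cover r c (of_ffun (rows_cols p q r c)).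
Proof.
exists c, (iota 0 r); split=> //; first by rewrite size_iota.
move=> x y _ _ Hcy /=; case: insubP => // x' _ <-; case: insubP => // y' _ Ey.
by rewrite ffunE /= Ey mem_iota; case/orP; lia.
Qed.

Lemma tail_cover_G23 p q l k (ih : 'I_k.-1 -> 'I_p) :
  tail_cover k.-1 l.-1 (G23 p q l ih).
Proof.
exists l.-1, [seq (ih h : nat) | h <- enum 'I_k.-1].
split=> //; first by rewrite size_map size_enum_ord.
move=> x y _ _ Hly /and3P[_ _ /orP[Hyl | /existsP[h /eqP <-]]]; first lia.
by apply: map_f; rewrite mem_enum.
Qed.

Theorem lemma2p3 (p q k l : nat) (ih : 'I_k.-1 -> 'I_p) :
  0 < p -> 0 < q -> 0 < k -> 0 < l -> k <= l ->
  k <= p -> l <= q -> p <= l.-1 ->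
  ~ interval_minor (Kbip k l) (G23 p q l ih) /\
  (l.-1 * (p - k + 1) + q * k.-1 <= m_ex p q k l).
Proof.
move=> _ _ k0 l0 _ kp lq pl; split.
  by apply: tail_cover_Kbip_free => //; apply: tail_cover_G23.
have E_free : ~ interval_minor (Kbip k l) (of_ffun (rows_cols p q k.-1 l.-1)).
  by apply: tail_cover_Kbip_free => //; apply: tail_cover_rows_cols.
apply: leq_trans (leq_bigmax_cond _ (asboolT E_free)).
rewrite nedges_rows_cols; [|lia..].
have -> : p - k + 1 = p - k.-1 by lia.
by rewrite addnC [q * _]mulnC [l.-1 * _]mulnC.
Qed.
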